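(* Under the model and assumptions (A1)–(A2) (with $\theta^\ast\in\Theta$ almost surely), define the confidence set $$\Theta_{1-\alpha}=\Big\{\theta\in\Theta:\ \max_{\psi\in\Psi}\mathrm{pval}(\theta,\psi)>\alpha\Big\}.$$ Then $\Pr(\theta^\ast\in\Theta_{1-\alpha})\ge 1-\alpha$ for every $\alpha\in(0,1)$.
   Context: Data $y_i=y^{\mathrm{p}}(t_i)+\varepsilon(t_i)$, $i=1,\dots,n$, with times $T^{(n)}$, data vector $Y^{(n)}$, error vector $\varepsilon^{(n)}$. (A1): $g\,\varepsilon^{(n)}\overset{d}{=}\varepsilon^{(n)}$ given $T^{(n)}$ for all $g\in\mathbb{D}^n$, the group of $n\times n$ diagonal $\pm1$ matrices. (A2): $y^{\mathrm{p}}(t)=y^{\mathrm{p}}(t;\theta^\ast,\psi^\ast)$ where $y^{\mathrm{p}}(t;\theta,\psi)=\psi_1+\psi_2\cos(2\pi t/\theta)+\psi_3\sin(2\pi t/\theta)$, $\theta^\ast\in\Theta$ (a finite subset of $\mathbb{R}^+$), $\psi^\ast\in\Psi\subseteq\mathbb{R}^3$ convex and compact. For $(\theta_0,\psi_0)\in\Theta\times\Psi$: loss $L(\theta,\psi)=\sum_i[y_i-y^{\mathrm{p}}(t_i;\theta,\psi)]^2/\sigma_i^2$ (known $\sigma_i^2>0$), $L_{0n}=\sum_i(y_i-\bar y)^2/\sigma_i^2$, $A_n(\theta\mid Y^{(n)},T^{(n)},\psi)=(L_{0n}-L(\theta,\psi))/L_{0n}$; statistic $s_n(Y^{(n)},T^{(n)})=\max_{\theta\in\Theta}A_n(\theta\mid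 Y^{(n)},T^{(n)},\psi_0)-A_n(\theta_0\mid Y^{(n)},T^{(n)},\psi_0)$, $s_{\mathrm{obs}}$ its observed value; $Y^{(n),\mathrm{p}}_0=(y^{\mathrm{p}}(t_i;\theta_0,\psi_0))_i$; for $G\sim\mathrm{Unif}(\mathbb{D}^n)$, $Y^{(n),G}=Y^{(n),\mathrm{p}}_0+G(Y^{(n)}-Y^{(n),\mathrm{p}}_0)$; $\mathrm{pval}(\theta_0,\psi_0)=\Pr_G\{s_n(Y^{(n),G},T^{(n)})\ge s_{\mathrm{obs}}\mid Y^{(n)},T^{(n)}\}$. *)

From HB Require Import structures.
From mathcomp Require Import all_boot all_order all_algebra.
From mathcomp Require Import all_classical all_reals all_analysis.
Set Implicit Arguments. Unset Strict Implicit. Unset Printing Implicit Defensive.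
Import Order.TTheory GRing.Theory Num.Theory.
Local Open Scope classical_set_scope.
Local Open Scope ring_scope.

Section Model.
Variable R : realType.

Definition psi1 (p : R * R * R) : R := p.1.1.
Definition psi2 (p : R * R * R) : R := p.1.2.
Definition psi3 (p : R * R * R) : R := p.2.

Definition yp (t theta : R) (p : R * R * R) : R :=
  psi1 p + psi2 p * cos (2 * pi * t / theta) + psi3 p * sin (2 * pi * t / theta).

Definition convex3 (S : set (R * R * R)) : Prop :=
  forall x y, S x -> S y -> forall l : R, 0 <= l <= 1 ->
    S (l * x.1.1 + (1 - l) * y.1.1, l * x.1.2 + (1 - l) * y.1.2,
       l * x.2 + (1 - l) * y.2).

Variable n : nat.

(* elements g of D^n (diagonal +-1 matrices) are encoded by their sign pattern:
   the i-th diagonal entry is (-1)^(g i) *)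
Definition sgnD (g : {ffun 'I_n -> bool}) (i : 'I_n) : R := (-1) ^+ g i.

Definition actD (g : {ffun 'I_n -> bool}) (v : n.-tuple R) : n.-tuple R :=
  [tuple sgnD g i * tnth v i | i < n].

Variable sigma2 : n.-tuple R.

Definition loss (Y T : n.-tuple R) (theta : R) (p : R * R * R) : R :=
  \sum_(i < n) (tnth Y i - yp (tnth T i) theta p) ^+ 2 / tnth sigma2 i.

Definition ybar (Y : n.-tuple R) : R := (\sum_(i < n) tnth Y i) / n%:R.

Definition loss0 (Y : n.-tuple R) : R :=
  \sum_(i < n) (tnth Y i - ybar Y) ^+ 2 / tnth sigma2 i.

Definition An (Y T : n.-tuple R) (theta : R) (p : R * R * R) : R :=
  (loss0 Y - loss Y T theta p) / loss0 Y.

(* s_n(Y, T) for the null (theta0, psi0); Theta is finite and contains theta0,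
   so the sup below is a maximum *)
Definition sn (Theta : set R) (theta0 : R) (psi0 : R * R * R)
  (Y T : n.-tuple R) : R :=
  sup [set An Y T th psi0 | th in Theta] - An Y T theta0 psi0.

Definition Yp0 (T : n.-tuple R) (theta0 : R) (psi0 : R * R * R) : n.-tuple R :=
  [tuple yp (tnth T i) theta0 psi0 | i < n].

Definition Yg (g : {ffun 'I_n -> bool}) (Y T : n.-tuple R) (theta0 : R)
  (psi0 : R * R * R) : n.-tuple R :=
  [tuple tnth (Yp0 T theta0 psi0) i +
         sgnD g i * (tnth Y i - tnth (Yp0 T theta0 psi0) i) | i < n].

Definition pval (Theta : set R) (Y T : n.-tuple R) (theta0 : R)
  (psi0 : R * R * R) : R :=
  (#|[set g : {ffun 'I_n -> bool} |
       sn Theta theta0 psi0 (Yg g Y T theta0 psi0) T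
       >= sn Theta theta0 psi0 Y T]|%:R) / (#|{ffun 'I_n -> bool}|%:R).

(* max_{psi in Psi} pval(theta, psi): pval takes finitely many values, so the
   sup is attained, i.e. it is a maximum *)
Definition maxpval (Theta : set R) (Psi : set (R * R * R)) (Y T : n.-tuple R)
  (theta : R) : R :=
  sup [set pval Theta Y T theta p | p in Psi].

Definition conf_set (Theta : set R) (Psi : set (R * R * R)) (alpha : R)
  (Y T : n.-tuple R) : set R :=
  [set theta | Theta theta /\ maxpval Theta Psi Y T theta > alpha].

End Model.

(* Fix the true parameters (theta_star, psi_star).  Writing the data as a
   function of the times t and errors e, the statistic s_n for this null
   becomes a function S(t, e), and the randomization p-value at
   (theta_star, psi_star) is the rank count #{g in D^n : S(t, e) <= S(t, g e)}
   divided by 2^n, since under the null flipping the residuals is flipping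
   the errors.

   The argument is the classical one for randomization tests:
   - combinatorics: along any orbit {(t, h e) : h in D^n} of the sign-flip
     action, at most k flips have a rank count at most k (few_low_ranks);
   - probability: by (A1) all flipped samples have the law of the observed
     one, so averaging over the orbit gives P(count <= alpha 2^n) <= alpha
     (randomization_test_level), hence coverage 1 - alpha;
   - finally pval(theta_star, psi_star) <= max_psi pval(theta_star, psi), so
     theta_star lies in the confidence set whenever the count exceeds
     alpha 2^n. *)

From HB Require Import structures.
From mathcomp Require Import all_boot all_order all_algebra.
From mathcomp Require Import all_classical all_reals all_analysis.
Set Implicit Arguments. Unset Strict Implicit. Unset Printing Implicit Defensive.
Import measurable_realfun.
Import Order.TTheory GRing.Theory Num.Theory numFieldNormedType.Exports.
Local Open Scope classical_set_scope.
Local Open Scope ring_scope.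

(* The inverse map on the reals (with 0^-1 = 0) is Borel measurable: it is
   continuous away from 0 and the singleton {0} is measurable. *)
Lemma measurable_inv (R : realType) : measurable_fun [set: R] (@GRing.inv R).
Proof.
rewrite -(setUv [set 0 : R]); apply/measurable_funU => //.
  exact: measurableC.
split; first exact: measurable_fun_set1.
apply: open_continuous_measurable_fun.
  by rewrite openC; exact: closed_eq.
by move=> x; rewrite inE /= => /eqP x0; exact: inv_continuous.
Qed.

Section MeasurableModel.
Variables (R : realType) (n : nat) (sigma2 : n.-tuple R).
Variables (d : measure_display) (X : measurableType d).
Implicit Types (f : X -> R) (F G : X -> n.-tuple R).

Lemma measurable_yp theta p f : measurable_fun setT f ->
  measurable_fun setT (fun x => yp (f x) theta p).
Proof.
move=> mf.
have mphase : measurable_fun setT (fun x => 2 * pi * f x / theta).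
  apply: measurable_funM; last exact: measurable_cst.
  by apply: measurable_funM => //; exact: measurable_cst.
have mtrig (h : R -> R) : continuous h ->
    measurable_fun setT (fun x => h (2 * pi * f x / theta)).
  move=> ch; apply: (measurableT_comp (f := h) _ mphase).
  exact: continuous_measurable_fun.
apply: measurable_funD; first apply: measurable_funD.
- exact: measurable_cst.
- apply: measurable_funM; first exact: measurable_cst.
  exact: (mtrig _ (@continuous_cos R)).
- apply: measurable_funM; first exact: measurable_cst.
  exact: (mtrig _ (@continuous_sin R)).
Qed.

Lemma measurable_tnth_comp F i : measurable_fun setT F ->
  measurable_fun setT (fun x => tnth (F x) i).
Proof. by move=> mF; exact: (measurableT_comp (measurable_tnth i)). Qed.

Lemma measurable_loss F G theta p :
  measurable_fun setT F -> measurable_fun setT G ->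
  measurable_fun setT (fun x => loss sigma2 (F x) (G x) theta p).
Proof.
move=> mF mG; apply: measurable_sum => i.
apply: measurable_funM; last exact: measurable_cst.
apply: measurable_funX; apply: measurable_funB; first exact: measurable_tnth_comp.
by apply: measurable_yp; exact: measurable_tnth_comp.
Qed.

Lemma measurable_loss0 F : measurable_fun setT F ->
  measurable_fun setT (fun x => loss0 sigma2 (F x)).
Proof.
move=> mF; apply: measurable_sum => i.
apply: measurable_funM; last exact: measurable_cst.
apply: measurable_funX; apply: measurable_funB; first exact: measurable_tnth_comp.
apply: measurable_funM; last exact: measurable_cst.
by apply: measurable_sum => j; exact: measurable_tnth_comp.
Qed.

Lemma measurable_An F G theta p :
  measurable_fun setT F -> measurable_fun setT G ->
  measurable_fun setT (fun x => An sigma2 (F x) (G x) theta p).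
Proof.
move=> mF mG; apply: measurable_funM.
  by apply: measurable_funB; [exact: measurable_loss0|exact: measurable_loss].
apply: (measurableT_comp (f := @GRing.inv R)); first exact: measurable_inv.
exact: measurable_loss0.
Qed.

End MeasurableModel.

Section FiniteMaximum.
Variables (R : realType) (T : eqType).

Definition maxfold (f : T -> R) (a : T) (s : seq T) : R :=
  foldr (fun th m => Num.max (f th) m) (f a) s.

Lemma maxfoldP (f : T -> R) (a : T) (s : seq T) :
  (maxfold f a s = f a \/ exists2 th, th \in s & maxfold f a s = f th) /\
  (forall th, th \in s -> f th <= maxfold f a s).
Proof.
elim: s => [|b s [IHval IHub]] /=; first by split; [left|].
rewrite /maxfold /= -/(maxfold f a s); split.
- have [_|_] := leP (f b) (maxfold f a s).
    case: IHval => [->|[th ths ->]]; first by left.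
    by right; exists th => //; rewrite inE ths orbT.
  by right; exists b => //; exact: mem_head.
- move=> th; rewrite inE => /orP[/eqP ->|ths]; first by rewrite le_max lexx.
  by rewrite le_max IHub ?orbT.
Qed.

Lemma sup_image_seq (f : T -> R) (a : T) (s : seq T) : a \in s ->
  sup [set f th | th in [set` s]] = maxfold f a s.
Proof.
move=> sa; have [attained ub] := maxfoldP f a s.
apply/le_anti/andP; split.
  by apply: ge_sup; [exists (f a), a | move=> _ [th ths <-]; exact: ub].
apply: ub_le_sup; first by exists (maxfold f a s) => _ [th ths <-]; exact: ub.
by case: attained => [->|[th ths ->]]; [exists a|exists th].
Qed.

Lemma measurable_maxfold (d : measure_display) (X : measurableType d)
    (F : T -> X -> R) (a : T) (s : seq T) :
  (forall th, measurable_fun setT (F th)) ->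
  measurable_fun setT (fun x => maxfold (F ^~ x) a s).
Proof.
move=> mF; elim: s => [|b s IH] //=.
by apply: measurable_maxr => //; exact: mF.
Qed.

End FiniteMaximum.

Section Counting.
Variable R : realType.

Lemma sum_indicator_card (I : finType) (Q : pred I) :
  \sum_(i : I) (Q i)%:R = #|[set i | Q i]|%:R :> R.
Proof.
rewrite -sum1_card natr_sum [RHS]big_mkcond /=; apply: eq_bigr => i _.
case: ifPn => [/set_mem /= -> //|]; case: (boolP (Q i)) => // Qi /negP[].
exact: mem_set.
Qed.

(* Combinatorial heart of randomization tests: among finitely many values
   x h, at most k of them have at most k values above or equal to them.
   Indeed the smallest such value x h0 is below every other such value, so
   their number is bounded by the count attached to h0. *)
Lemma few_low_ranks (I : finType) (x : I -> R) (k : R) : 0 <= k ->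
  \sum_(h : I) ((\sum_(g : I) (x h <= x g)%R%:R) <= k)%R%:R <= k.
Proof.
move=> k_ge0; pose low h := (\sum_(g : I) (x h <= x g)%R%:R) <= k.
have [h1 low_h1|no_low] := pickP low; last first.
  by rewrite big1 // => h _; move: (no_low h); rewrite /low => ->.
have [h0 low_h0 h0_min] := arg_minP x low_h1.
apply: le_trans low_h0; apply: ler_sum => h _.
by have := h0_min h; rewrite /low; case: (_ <= k) => [->|_] //; case: (_ <= _).
Qed.

End Counting.

Section SignFlips.
Variables (R : realType) (n : nat).

(* Sign patterns multiply by pointwise exclusive or. *)
Definition xor_signs (g h : {ffun 'I_n -> bool}) : {ffun 'I_n -> bool} :=
  [ffun i => g i (+) h i].

Lemma xor_signsK (h : {ffun 'I_n -> bool}) :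
  cancel (xor_signs ^~ h) (xor_signs ^~ h).
Proof. by move=> g; apply/ffunP => i; rewrite !ffunE addbK. Qed.

Lemma actD_comp (g h : {ffun 'I_n -> bool}) (e : n.-tuple R) :
  actD g (actD h e) = actD (xor_signs g h) e.
Proof.
apply: eq_from_tnth => i; rewrite !tnth_map !tnth_ord_tuple /sgnD ffunE.
by rewrite signr_addb mulrA.
Qed.

Lemma measurable_actD (g : {ffun 'I_n -> bool}) :
  measurable_fun setT (@actD R n g).
Proof.
apply/measurable_fun_tnthP => i.
rewrite (_ : _ \o _ = fun e => sgnD R g i * tnth e i).
  by apply: measurable_funM; [exact: measurable_cst|exact: measurable_tnth].
by apply/funext => e /=; rewrite tnth_map tnth_ord_tuple.
Qed.

Lemma card_signs_gt0 : 0 < #|{ffun 'I_n -> bool}|%:R :> R.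
Proof. by rewrite ltr0n; apply/card_gt0P; exists [ffun => false]. Qed.

End SignFlips.

Section RankCount.
Variables (R : realType) (n : nat) (dT : measure_display) (T : measurableType dT).
Variable S : T * n.-tuple R -> R.

Definition rank_count (x : T * n.-tuple R) : R :=
  \sum_(g : {ffun 'I_n -> bool}) (S x <= S (x.1, actD g x.2))%R%:R.

(* Flipping the errors by h only permutes the orbit {actD g e}. *)
Lemma rank_count_flip (t : T) (e : n.-tuple R) (h : {ffun 'I_n -> bool}) :
  rank_count (t, actD h e) =
  \sum_(g : {ffun 'I_n -> bool}) (S (t, actD h e) <= S (t, actD g e))%R%:R.
Proof.
rewrite /rank_count /= (reindex_inj (can_inj (xor_signsK h))) /=.
by apply: eq_bigr => g _; rewrite actD_comp xor_signsK.
Qed.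

Lemma orbit_low_counts (t : T) (e : n.-tuple R) (k : R) : 0 <= k ->
  \sum_(h : {ffun 'I_n -> bool}) (rank_count (t, actD h e) <= k)%R%:R <= k.
Proof.
move=> k_ge0; under eq_bigr do rewrite rank_count_flip.
exact: (few_low_ranks (fun g => S (t, actD g e))).
Qed.

Lemma measurable_rank_count : measurable_fun setT S ->
  measurable_fun setT rank_count.
Proof.
move=> mS; apply: measurable_sum => g.
apply: (measurableT_comp (f := fun b : bool => (b : nat)%:R : R)) => //.
apply: measurable_fun_ler => //; apply: (measurableT_comp mS).
apply: measurable_fun_pair => //.
exact: measurableT_comp (measurable_actD g) measurable_snd.
Qed.

End RankCount.

Section RandomizationTest.
Variables (R : realType) (d : measure_display) (Omega : measurableType d).
Variables (P : probability Omega R) (n : nat).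
Variables (dT : measure_display) (T : measurableType dT).
Variables (Tn : Omega -> T) (eps : Omega -> n.-tuple R).
Variable S : T * n.-tuple R -> R.
Hypotheses (mTn : measurable_fun setT Tn) (meps : measurable_fun setT eps).
Hypothesis mS : measurable_fun setT S.
Hypothesis sign_invariance : forall (g : {ffun 'I_n -> bool})
    (A : set (T * n.-tuple R)), measurable A ->
  P ((fun w => (Tn w, actD g (eps w))) @^-1` A) =
  P ((fun w => (Tn w, eps w)) @^-1` A).

Let N : R := #|{ffun 'I_n -> bool}|%:R.

Let flipped (h : {ffun 'I_n -> bool}) (w : Omega) := (Tn w, actD h (eps w)).

Lemma measurable_flipped h : measurable_fun setT (flipped h).
Proof.
apply: measurable_fun_pair => //.
exact: measurableT_comp (measurable_actD h) meps.
Qed.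

Lemma measurable_low_counts (k : R) :
  measurable [set x | rank_count S x <= k]%R.
Proof.
have := measurable_rank_count mS measurableT (measurable_itv `]-oo, k]).
by rewrite setTI; congr measurable; apply/seteqP; split => x; rewrite /= in_itv.
Qed.

Lemma measurable_low_event (Z : Omega -> T * n.-tuple R) (k : R) :
  measurable_fun setT Z -> measurable [set w | rank_count S (Z w) <= k]%R.
Proof.
move=> mZ; rewrite -[X in measurable X]setTI.
exact: (mZ measurableT _ (measurable_low_counts k)).
Qed.

(* Averaging orbit_low_counts: the expected number of sign flips h for which
   the flipped sample has a count at most k is itself at most k. *)
Lemma expected_low_counts (k : R) : 0 <= k ->
  (\sum_(h : {ffun 'I_n -> bool})
     P [set w | rank_count S (flipped h w) <= k]%R <= k%:E)%E.
Proof.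
move=> k_ge0; pose C h := [set w | rank_count S (flipped h w) <= k]%R.
have mC h : measurable (C h).
  exact: measurable_low_event (measurable_flipped h).
have mind h : measurable_fun setT (fun w => (\1_(C h) w)%:E : \bar R).
  by apply/measurable_EFinP; exact: measurable_indic.
rewrite (eq_bigr (fun h => \int[P]_w (\1_(C h) w)%:E)%E); last first.
  by move=> h _; rewrite integral_indic // setIT.
rewrite -ge0_integral_sum //.
apply: (@le_trans _ _ (\int[P]_w k%:E)%E).
  apply: ge0_le_integral => //.
  - by move=> w _; apply: sume_ge0 => h _; rewrite lee_fin.
  - exact: emeasurable_sum.
  - move=> w _; rewrite sumEFin lee_fin.
    have memC h : (w \in C h) = (rank_count S (flipped h w) <= k)%R.
      by apply/idP/idP => [/set_mem|/mem_set].
    under eq_bigr do rewrite indicE memC.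
    exact: orbit_low_counts.
rewrite integral_cst // -[leRHS]mule1; apply: lee_wpmul2l.
  by rewrite lee_fin.
exact: probability_le1.
Qed.

(* Level of the randomization test: by (A1) every flipped sample has the
   same probability of a low count, so 2^n times this probability is at
   most alpha 2^n. *)
Lemma randomization_test_level (alpha : R) : 0 <= alpha ->
  (P [set w | rank_count S (Tn w, eps w) <= alpha * N]%R <= alpha%:E)%E.
Proof.
move=> alpha_ge0; set B := [set w | _]%R.
have mB : measurable B.
  exact: measurable_low_event (measurable_fun_pair mTn meps).
have := expected_low_counts (mulr_ge0 alpha_ge0 (ltW (card_signs_gt0 R n))).
rewrite (eq_bigr (fun=> P B)) => [|h _]; last first.
  exact: (sign_invariance h (measurable_low_counts _)).
rewrite -[P B]fineK ?fin_num_measure // sumEFin !lee_fin sumr_const.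
by rewrite -[fine _ *+ _]mulr_natr ler_pM2r // card_signs_gt0.
Qed.

Lemma randomization_test_coverage (alpha : R) : 0 <= alpha ->
  let E := [set w | alpha * N < rank_count S (Tn w, eps w)]%R in
  measurable E /\ ((1 - alpha)%:E <= P E)%E.
Proof.
move=> alpha_ge0 E.
have -> : E = ~` [set w | rank_count S (Tn w, eps w) <= alpha * N]%R.
  by apply/seteqP; split => w; rewrite /E /= ltNge => /negP.
have mB : measurable [set w | rank_count S (Tn w, eps w) <= alpha * N]%R.
  exact: measurable_low_event (measurable_fun_pair mTn meps).
split; first exact: measurableC.
have := randomization_test_level alpha_ge0.
rewrite probability_setC // -[P _]fineK ?fin_num_measure // -EFinB !lee_fin.
by move=> le_alpha; rewrite lerB.
Qed.

End RandomizationTest.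

Section ModelStatistic.
Variables (R : realType) (n : nat) (sigma2 : n.-tuple R) (Theta : set R).
Variables (theta0 : R) (psi0 : R * R * R).

Definition model_data (t e : n.-tuple R) : n.-tuple R :=
  [tuple yp (tnth t i) theta0 psi0 + tnth e i | i < n].

Definition model_stat (x : n.-tuple R * n.-tuple R) : R :=
  sn sigma2 Theta theta0 psi0 (model_data x.1 x.2) x.1.

Lemma Yg_model_data (g : {ffun 'I_n -> bool}) (t e : n.-tuple R) :
  Yg g (model_data t e) t theta0 psi0 = model_data t (actD g e).
Proof.
apply: eq_from_tnth => i; rewrite !tnth_map !tnth_ord_tuple.
by rewrite [_ + tnth e i]addrC addrK.
Qed.

Lemma pval_model_data (t e : n.-tuple R) :
  pval sigma2 Theta (model_data t e) t theta0 psi0 =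
  rank_count model_stat (t, e) / #|{ffun 'I_n -> bool}|%:R.
Proof.
rewrite /pval /rank_count sum_indicator_card; congr (#|_|%:R / _).
by apply/seteqP; split => g /=; rewrite Yg_model_data.
Qed.

Lemma measurable_model_data :
  measurable_fun setT (fun x : n.-tuple R * n.-tuple R => model_data x.1 x.2).
Proof.
apply/measurable_fun_tnthP => i.
rewrite (_ : _ \o _ = fun x => yp (tnth x.1 i) theta0 psi0 + tnth x.2 i).
  apply: measurable_funD; first apply: measurable_yp.
    exact: measurable_tnth_comp measurable_fst.
  exact: measurable_tnth_comp measurable_snd.
by apply/funext => x /=; rewrite tnth_map tnth_ord_tuple.
Qed.

(* For a finite parameter set the supremum in s_n is a finite maximum, so
   the statistic is measurable. *)
Lemma measurable_model_stat : finite_set Theta -> Theta theta0 ->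
  measurable_fun setT model_stat.
Proof.
move=> /finite_seqP[s Theta_s]; rewrite Theta_s => s_theta0.
have mA theta := measurable_An sigma2 theta psi0 measurable_model_data
  (@measurable_fst _ _ (n.-tuple R) (n.-tuple R)).
rewrite (_ : model_stat = fun x =>
    maxfold (fun theta => An sigma2 (model_data x.1 x.2) x.1 theta psi0) theta0 s
    - An sigma2 (model_data x.1 x.2) x.1 theta0 psi0).
  by apply: measurable_funB => //; exact: measurable_maxfold.
apply/funext => x; rewrite /model_stat /sn.
by rewrite Theta_s (sup_image_seq (fun theta => An sigma2 _ _ theta psi0) s_theta0).
Qed.

End ModelStatistic.

(* A p-value is at most 1, so maximizing it over the nuisance parameters
   gives an upper bound for each of its values. *)
Lemma pval_le_maxpval (R : realType) (n : nat) (sigma2 : n.-tuple R)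
    (Theta : set R) (Psi : set (R * R * R)) (Y t : n.-tuple R) (theta : R)
    (p : R * R * R) :
  Psi p -> pval sigma2 Theta Y t theta p <= maxpval sigma2 Theta Psi Y t theta.
Proof.
move=> Psi_p; apply: ub_le_sup; last by exists p.
exists 1 => _ [q _ <-]; rewrite /pval ler_pdivrMr ?card_signs_gt0 // mul1r.
by rewrite ler_nat max_card.
Qed.

Theorem theorem2 (R : realType) (d : measure_display) (Omega : measurableType d)
  (P : probability Omega R) (n : nat)
  (sigma2 : n.-tuple R) (Theta : set R) (Psi : set (R * R * R))
  (theta_star : R) (psi_star : R * R * R)
  (Tn eps : Omega -> n.-tuple R) :
  (forall i, 0 < tnth sigma2 i) ->
  finite_set Theta -> Theta `<=` [set x | 0 < x] ->
  convex3 Psi -> compact Psi ->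
  (* (A2) *)
  Theta theta_star -> Psi psi_star ->
  (* times and errors are random vectors *)
  measurable_fun setT Tn -> measurable_fun setT eps ->
  (* (A1): g eps =d eps conditionally on T, i.e. (T, g eps) =d (T, eps) *)
  (forall g : {ffun 'I_n -> bool}, forall A : set (n.-tuple R * n.-tuple R),
      measurable A ->
      P ((fun w => (Tn w, actD g (eps w))) @^-1` A) =
      P ((fun w => (Tn w, eps w)) @^-1` A)) ->
  forall alpha : R, 0 < alpha < 1 ->
  let Y := fun w => [tuple yp (tnth (Tn w) i) theta_star psi_star
                           + tnth (eps w) i | i < n] in
  (* Pr(theta* in Theta_{1-alpha}) >= 1 - alpha, as an inner probability *)
  exists E : set Omega, measurable E /\
    E `<=` [set w | conf_set sigma2 Theta Psi alpha (Y w) (Tn w) theta_star] /\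
    ((1 - alpha)%:E <= P E)%E.
Proof.
move=> _ Theta_fin _ _ _ Theta_star Psi_star mTn meps sign_invariance alpha.
move=> /andP[alpha_gt0 _] Y.
pose S := model_stat sigma2 Theta theta_star psi_star.
have mS : measurable_fun setT S by exact: measurable_model_stat.
have [mE PE] := randomization_test_coverage mTn meps mS sign_invariance
  (ltW alpha_gt0).
eexists; split; [exact: mE | split; last exact: PE].
move=> w /= high_count; split => //.
have pval_star : pval sigma2 Theta (Y w) (Tn w) theta_star psi_star > alpha.
  rewrite [Y w](_ : _ = model_data theta_star psi_star (Tn w) (eps w)) //.
  by rewrite pval_model_data ltr_pdivlMr ?card_signs_gt0.
by apply: lt_le_trans pval_star _; exact: pval_le_maxpval.
Qed.
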